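(* Let $n\ge 1$ and let $F$ be a finite simple graph that contains $\widehat{G}_n$ as an induced subgraph, such that the only edge of $F$ joining a vertex of $V(G_n)$ to a vertex of $V(F)\setminus V(G_n)$ is the edge $r_n y_n$. Then for every zero forcing set $P$ of $F$: (i) $|V(G_n)\cap P|\ge t_n$; (ii) if $|V(G_n)\cap P| = t_n$, then $r_n\notin P$, and in the zero forcing process of $F$ started from $P$ (for any valid order of forcing steps) the vertex $r_n$ is never forced by a vertex of $V(G_n)$.
   Context: Zero forcing: given a graph and a set $S$ of vertices initially colored black (all others white), repeatedly apply the rule: if a black vertex $v$ has exactly one white neighbor $u$, then $u$ becomes black (we say $v$ forces $u$). $S$ is a zero forcing set if eventually every vertex becomes black. $Z(G)$ is the minimum size of a zero forcing set of $G$. Subdivided $K_4$: the complete graph on 4 vertices $a,b,c,e$ with the edge $ab$ subdivided by a new vertex $s$ (so 5 vertices, edges $as, sb, ac, ae, bc, be, ce$); $s$ is called its subdivision vertex. $B_d$ ($d\ge1$) is the complete binary tree with $2^d-1$ vertices and root $r$ (for $d=1$ a single vertex; otherwise $r$ has two children that are roots of copies of $B_{d-1}$). $G_n$ ($n\ge1$): take $B_{2n-1}$ with root $r_n$, and for every leaf $\ell$ of $B_{2n-1}$ attach a new copy of the subdivided $K_4$ by identifying $\ell$ with its subdivision vertex. (So $G_1$ is the subdivided $K_4$ with $r_1$ its subdivision vertex.) $\widehat{G}_n$ is obtained from $G_n$ by adding a new vertex $y_n$ adjacent only to $r_n$. The sequence $t_n$ is defined by $t_1=2$ and $t_{n+1}=4t_n+2$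 for $n\ge1$. *)

From mathcomp Require Import all_boot.
Set Implicit Arguments. Unset Strict Implicit. Unset Printing Implicit Defensive.

Section ZF.
Variables (T : finType) (e : rel T).

Definition force_ok (B : {set T}) (v u : T) : bool :=
  [&& v \in B, u \notin B, e v u & [forall w, (e v w && (w != u)) ==> (w \in B)]].

(* a chronological list of forces (v, u) = "v forces u", each valid at its time *)
Fixpoint valid_forces (B : {set T}) (s : seq (T * T)) : bool :=
  if s is (v, u) :: s' then force_ok B v u && valid_forces (u |: B) s' else true.

Definition derived (B : {set T}) (s : seq (T * T)) : {set T} :=
  B :|: [set x | x \in map snd s].

Definition zero_forcing_set (P : {set T}) : Prop :=
  exists s, valid_forces P s /\ derived P s = [set: T].
End ZF.

(* d = 2n-1 is the depth of the binary tree B_d.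
   Tree vertices: 'I_(2^d - 1); index i stands for heap number i+1
   (root = 0; the children of i are 2i+1 and 2i+2).
   Leaves are the indices L-1 .. 2L-2 where L = 2^(d-1); leaf number k : 'I_L is index L-1+k.
   Gadget vertices attached to leaf k: (k, x) with x : 'I_4, x = 0,1,2,3 standing for a,b,c,e
   of the subdivided K4 whose subdivision vertex s is the leaf itself. *)
Definition tdepth (n : nat) := (2 * n - 1)%N.
Definition tsize (n : nat) := (2 ^ tdepth n - 1)%N.
Definition nleaves (n : nat) := (2 ^ (tdepth n - 1))%N.

Definition Gvert (n : nat) : finType := ('I_(tsize n) + 'I_(nleaves n) * 'I_4)%type.
(* vertices of \hat G_n : Some w for w in G_n, None = y_n *)
Definition Hvert (n : nat) : finType := option (Gvert n).

Definition tree_adj (i j : nat) : bool :=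
  [|| j == i.*2.+1, j == i.*2.+2, i == j.*2.+1 | i == j.*2.+2].

(* leaf k (index nleaves n - 1 + k) is the subdivision vertex s, adjacent to a (0) and b (1) *)
Definition leaf_gadget_adj (n : nat) (i : 'I_(tsize n)) (k : 'I_(nleaves n)) (x : 'I_4) : bool :=
  (val i == nleaves n - 1 + val k)%N && (val x < 2)%N.

(* inside a gadget: edges ac, ae, bc, be, ce, i.e. all pairs of {a,b,c,e} except ab *)
Definition gadget_adj (x x' : 'I_4) : bool :=
  (x != x') && (val x + val x' != 1)%N.

Definition Gadj (n : nat) (u v : Gvert n) : bool :=
  match u, v with
  | inl i, inl j => tree_adj i j
  | inl i, inr (k, x) => leaf_gadget_adj i k x
  | inr (k, x), inl i => leaf_gadget_adj i k x
  | inr (k, x), inr (k', x') => (k == k') && gadget_adj x x'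
  end.

(* the root r_n of B_{2n-1} (for n >= 1 this is Some (inl 0)) *)
Definition rootv (n : nat) : Hvert n := omap inl (insub 0%N : option 'I_(tsize n)).

Definition Hadj (n : nat) (u v : Hvert n) : bool :=
  match u, v with
  | Some u', Some v' => Gadj u' v'
  | Some _, None => u == rootv n
  | None, Some _ => v == rootv n
  | None, None => false
  end.

(* t_1 = 2, t_{n+1} = 4 t_n + 2; tseq k = t_{k+1} *)
Fixpoint tseq (k : nat) : nat := if k is k'.+1 then (4 * tseq k' + 2)%N else 2%N.
Definition t (n : nat) : nat := tseq n.-1.

(* Everything follows from a claim about a piece A of F hanging at a vertex r: A contains
   at least k vertices of P, and if exactly k then r is white and is forced from outside A.
   For a subdivided K4 hanging at its subdivision vertex, k = 2: each of its two pairs of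
   twins {a,b} and {c,e} must meet P, and when only two of its vertices are in P, each of
   them has two white neighbours in the gadget, so nothing is forced in the gadget before
   the subdivision vertex is forced from outside. Going two levels up the tree, two tight
   siblings would both be forced by their common parent, which forces only once; so every
   pair of siblings needs 2k+1 vertices, and when it has exactly 2k+1 its parent forces into
   it. Hence a grandparent needs 4k+2 = t_(n+1), and in the tight case both of its children
   are busy forcing downwards, so neither can force it. *)

From Pilot Require Import Defs.
From mathcomp Require Import all_boot zify.
Set Implicit Arguments. Unset Strict Implicit. Unset Printing Implicit Defensive.

Lemma uniq_map_inj_in (A R : eqType) (f : A -> R) (s : seq A) :
  uniq (map f s) -> {in s &, injective f}.
Proof.
elim: s => //= a s IH /andP[fa_s /IH fs_inj] x y; rewrite !in_cons.
by case/predU1P=> [->|xs] /predU1P[->|ys] // fxy;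
  [move: fa_s; rewrite fxy map_f | move: fa_s; rewrite -fxy map_f | exact: fs_inj].
Qed.

Lemma has_avoid2 (A : eqType) (s : seq A) (q u : A) :
  uniq s -> 2 < size s -> has (fun j => (j != q) && (j != u)) s.
Proof.
move=> us; apply: contraTT => /hasPn avoid; rewrite -leqNgt.
apply: (uniq_leq_size us (s2 := [:: q; u])) => j /avoid.
by rewrite negb_and !negbK !inE.
Qed.

Lemma disjointsU (T : finType) (A B C : {set T}) :
  [disjoint A :|: B & C] = [disjoint A & C] && [disjoint B & C].
Proof. by rewrite !disjoints_subset subUset. Qed.

Lemma disjointsUr (T : finType) (A B C : {set T}) :
  [disjoint A & B :|: C] = [disjoint A & B] && [disjoint A & C].
Proof. by rewrite ![[disjoint A & _]]disjoint_sym disjointsU. Qed.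

Lemma card_setIU_disjoint (T : finType) (A B C : {set T}) : [disjoint A & B] ->
  #|(A :|: B) :&: C| = #|A :&: C| + #|B :&: C|.
Proof.
move=> AB; rewrite setIUl cardsU (_ : _ :&: _ :&: _ = set0) ?cards0 ?subn0 //.
by apply/disjoint_setI0; apply: disjointWl (subsetIl _ _) _; apply: disjointWr (subsetIl _ _) _.
Qed.

(** * Zero forcing chronologies *)

Section ForcingChronology.
Variables (T : finType) (e : rel T).
Implicit Types (B P W : {set T}) (s : seq (T * T)) (u v w : T).

Lemma force_ok_in B s v u : valid_forces e B s -> (v, u) \in s ->
  exists2 B' : {set T}, B \subset B' & force_ok e B' v u.
Proof.
elim: s B => [|[v' u'] s IH] B //= /andP[ok vs]; rewrite in_cons.
case/predU1P=> [[-> ->]|vu_s]; first by exists B.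
have [B' sB' ok'] := IH _ vs vu_s; exists B' => //.
by apply: subset_trans sB'; apply: subsetUr.
Qed.

Lemma forced_edge B s v u : valid_forces e B s -> (v, u) \in s -> e v u.
Proof. by move=> vs vu_s; have [B' _ /and4P[]] := force_ok_in vs vu_s. Qed.

Lemma forced_notin B s v u : valid_forces e B s -> (v, u) \in s -> u \notin B.
Proof.
move=> vs vu_s; have [B' sB' /and4P[_ uB' _ _]] := force_ok_in vs vu_s.
by apply: contra uB'; apply: (subsetP sB').
Qed.

(* After [v] forces, all its neighbours are black, so it cannot force again. *)
Lemma forcers_uniq B s : valid_forces e B s -> uniq (map fst s).
Proof.
elim: s B => [|[v u] s IH] B //= /andP[ok vs]; rewrite (IH _ vs) andbT.
apply/mapP => -[[v' u'] vu'_s /= vv']; subst v'.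
have [B' sB' /and4P[_ u'B' vu' _]] := force_ok_in vs vu'_s.
move: ok => /and4P[_ _ _ /forallP/(_ u')]; rewrite vu' /=.
have uB' : u \in B' by apply: (subsetP sB'); apply: setU11.
have -> /= : u' != u by apply: contraNneq u'B' => ->.
by move=> u'B; move: u'B'; rewrite (subsetP sB') // in_setU u'B orbT.
Qed.

Lemma forced_uniq B s : valid_forces e B s -> uniq (map snd s).
Proof.
elim: s B => [|[v u] s IH] B //= /andP[_ vs]; rewrite (IH _ vs) andbT.
by apply/mapP => -[[v' u'] vu'_s /= uu']; move: (forced_notin vs vu'_s); rewrite -uu' setU11.
Qed.

Lemma forcer_forces_once B s v u u' :
  valid_forces e B s -> (v, u) \in s -> (v, u') \in s -> u = u'.
Proof. by move=> /forcers_uniq/uniq_map_inj_in inj vu vu'; case: (inj _ _ vu vu' erefl). Qed.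

Lemma forced_once B s v v' u :
  valid_forces e B s -> (v, u) \in s -> (v', u) \in s -> v = v'.
Proof. by move=> /forced_uniq/uniq_map_inj_in inj vu vu'; case: (inj _ _ vu vu' erefl). Qed.

Lemma derived_forced P s u : derived P s = [set: T] -> u \notin P ->
  exists v, (v, u) \in s.
Proof.
move=> Ds uP; have : u \in derived P s by rewrite Ds inE.
by rewrite in_setU (negbTE uP) inE => /mapP[[v u'] vu_s /= ->]; exists v.
Qed.

Lemma first_force_into B s W : valid_forces e B s -> [disjoint W & B] ->
  (exists2 p, p \in s & p.2 \in W) ->
  exists v u, [/\ (v, u) \in s, u \in W, v \notin W & forall w, w \in W -> e v w -> w = u].
Proof.
elim: s B => [|[v u] s IH] B /=; first by move=> _ _ [].
move=> /andP[ok vs] WB [p p_s pW].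
have [uW|uW] := boolP (u \in W).
  move: ok => /and4P[vB _ _ /forallP only_u]; exists v, u; split=> //.
  - exact: mem_head.
  - by rewrite (disjointFl WB vB).
  move=> w wW vw; apply/eqP; apply: contraTT (only_u w) => wu.
  by rewrite vw wu (disjointFr WB wW).
have {}p_s : p \in s.
  by move: p_s pW; rewrite in_cons => /predU1P[-> /=|//]; rewrite (negbTE uW).
have WuB : [disjoint W & u |: B].
  rewrite disjoints_subset; apply/subsetP => x xW.
  by rewrite !inE negb_or (disjointFr WB xW) andbT; apply: contraNneq uW => <-.
have [v' [u' [vu_s]]] := IH _ vs WuB (ex_intro2 _ _ p p_s pW).
by exists v', u'; split=> //; rewrite in_cons vu_s orbT.
Qed.

Lemma twins_meet_zero_forcing P s w1 w2 :
  valid_forces e P s -> derived P s = [set: T] -> w1 != w2 ->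
  (forall v, v != w1 -> v != w2 -> e v w1 = e v w2) -> (w1 \in P) || (w2 \in P).
Proof.
move=> vs Ds w12 twins; apply/norP => -[w1P w2P].
have WP : [disjoint [set w1; w2] & P].
  by rewrite disjoints_subset; apply/subsetP => x; rewrite !inE => /orP[]/eqP->.
have [v1 v1_s] := derived_forced Ds w1P.
have [v [u [vu_s uW vW u_only]]] :=
  first_force_into vs WP (ex_intro2 _ _ (v1, w1) v1_s (set21 _ _)).
have [vw1 vw2] : v != w1 /\ v != w2 by move: vW; rewrite !inE negb_or => /andP.
have vu := forced_edge vs vu_s; move: uW; rewrite !inE => /orP[]/eqP eu; subst u.
- have ev2 : e v w2 by rewrite -twins.
  by move: w12; rewrite -(u_only w2) ?set22 ?eqxx.
- have ev1 : e v w1 by rewrite twins.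
  by move: w12; rewrite (u_only w1) ?set21 ?eqxx.
Qed.

End ForcingChronology.

(** * Pieces of the graph attached at a vertex *)

(* The theorem for a piece [A] of the graph attached at [r], relative to one chronology [s]. *)
Definition zf_bound (T : finType) (P : {set T}) (s : seq (T * T))
    (A : {set T}) (r : T) (k : nat) : Prop :=
  k <= #|A :&: P| /\
  (#|A :&: P| = k -> r \notin P /\ forall v, (v, r) \in s -> v \notin A).

Section CombiningBounds.
Variables (T : finType) (e : rel T) (P : {set T}) (s : seq (T * T)).
Hypotheses (vs : valid_forces e P s) (Ds : derived P s = [set: T]).

Definition attached (A : {set T}) (r c : T) : Prop :=
  forall v, e v r -> v \notin A -> v = c.

Lemma tight_forced_from A r c k : zf_bound P s A r k -> #|A :&: P| = k ->
  attached A r c -> (c, r) \in s.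
Proof.
move=> [_ tight] Ak Arc; have [rP not_in_A] := tight Ak.
have [v vr_s] := derived_forced Ds rP.
by rewrite -(Arc v (forced_edge vs vr_s) (not_in_A v vr_s)).
Qed.

Lemma siblings_bound A1 A2 g1 g2 c k :
  zf_bound P s A1 g1 k -> zf_bound P s A2 g2 k -> g1 \in A1 -> g2 \in A2 ->
  [disjoint A1 & A2] -> attached A1 g1 c -> attached A2 g2 c ->
  2 * k + 1 <= #|(A1 :|: A2) :&: P| /\
  (#|(A1 :|: A2) :&: P| = 2 * k + 1 -> exists2 g, g \in A1 :|: A2 & (c, g) \in s).
Proof.
move=> b1 b2 g1A1 g2A2 A12 att1 att2; rewrite card_setIU_disjoint //.
have [k1 k2] := (b1.1, b2.1).
have forced1 : #|A1 :&: P| = k -> (c, g1) \in s.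
  by move=> tight; apply: tight_forced_from b1 tight att1.
have forced2 : #|A2 :&: P| = k -> (c, g2) \in s.
  by move=> tight; apply: tight_forced_from b2 tight att2.
split.
  rewrite leqNgt; apply/negP => small.
  have g12 := forcer_forces_once vs (forced1 ltac:(lia)) (forced2 ltac:(lia)).
  by move: (disjointFr A12 g1A1); rewrite g12 g2A2.
move=> tight; have [t1|t2] : #|A1 :&: P| = k \/ #|A2 :&: P| = k by lia.
- by exists g1; rewrite ?inE ?g1A1 ?forced1.
- by exists g2; rewrite ?inE ?g2A2 ?orbT ?forced2.
Qed.

Lemma grandparent_bound (A B : {set T}) (r c1 c2 : T) m :
  m <= #|A :&: P| -> (#|A :&: P| = m -> exists2 g, g \in A & (c1, g) \in s) ->
  m <= #|B :&: P| -> (#|B :&: P| = m -> exists2 g, g \in B & (c2, g) \in s) ->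
  [disjoint A & B] -> [disjoint [set r; c1; c2] & A :|: B] ->
  (forall w, w \in A :|: B -> ~~ e w r) ->
  zf_bound P s ([set r; c1; c2] :|: (A :|: B)) r (2 * m).
Proof.
move=> mA forcesA mB forcesB AB RAB no_edge.
rewrite /zf_bound (card_setIU_disjoint _ RAB) (card_setIU_disjoint _ AB).
split; first by lia.
move=> tight; have rR : r \in [set r; c1; c2] by rewrite !inE eqxx.
have rP : r \notin P.
  apply/negP => rP; suff : 0 < #|[set r; c1; c2] :&: P| by lia.
  by apply/card_gt0P; exists r; rewrite inE rR.
split=> // v vr_s; have vr := forced_edge vs vr_s.
have v_forces_elsewhere (X : {set T}) : X \subset A :|: B ->
    (#|X :&: P| = m -> exists2 g, g \in X & (v, g) \in s) -> #|X :&: P| != m.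
  move=> XAB forcesX; apply/negP => /eqP /forcesX[g gX vg_s].
  have gr := forcer_forces_once vs vg_s vr_s; subst g.
  by move: (disjointFr RAB rR); rewrite (subsetP XAB).
rewrite !inE -!orbA; apply/negP; case/orP => [/eqP vr'|/or4P[/eqP vc1|/eqP vc2|vA|vB]].
- by subst v; have [B' _ /and4P[-> /negP]] := force_ok_in vs vr_s.
- by subst v; have := v_forces_elsewhere A (subsetUl _ _) forcesA; lia.
- by subst v; have := v_forces_elsewhere B (subsetUr _ _) forcesB; lia.
- by move: vr; apply/negP; apply: no_edge; rewrite inE vA.
- by move: vr; apply/negP; apply: no_edge; rewrite inE vB orbT.
Qed.

End CombiningBounds.

(** * The subdivided K4 *)

(* [None] is the subdivision vertex and [Some x] the vertex [x] of [gadget_adj]. *)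
Definition sk4_adj (o o' : option 'I_4) : bool :=
  match o, o' with
  | Some x, Some x' => gadget_adj x x'
  | Some x, None | None, Some x => val x < 2
  | None, None => false
  end.

Lemma sk4_adj_irr : irreflexive sk4_adj.
Proof. by case=> [[[|[|[|[|]]]] ?]|]. Qed.

(* [x./2 = y./2] pairs up the twins {a, b} and {c, e}. *)
Lemma sk4_twins (o : option 'I_4) (x y : 'I_4) : (val x)./2 = (val y)./2 ->
  o != Some x -> o != Some y -> sk4_adj o (Some x) = sk4_adj o (Some y).
Proof.
case: o => [[[|[|[|[|]]]] ?]|]; case: x => [[|[|[|[|]]]] ?]; case: y => [[|[|[|[|]]]] ?] //.
Qed.

(* The vertices a, b, c, e have degree three. *)
Lemma sk4_avoid2 (x : 'I_4) (q u : option 'I_4) :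
  exists2 j, sk4_adj (Some x) j & (j != q) && (j != u).
Proof.
pose c (i : nat) (lt_i4 : i < 4) := Some (Ordinal lt_i4).
suff [j1 [j2 [j3 [u123 adj123]]]] : exists j1 j2 j3,
    uniq [:: j1; j2; j3] /\ all (sk4_adj (Some x)) [:: j1; j2; j3].
  have /hasP[j j123 avoid] := has_avoid2 q u u123 isT.
  by exists j => //; apply: (allP adj123).
case: x => [[|[|[|[|]]]] //] ?.
- by exists None, (c 2 isT), (c 3 isT).
- by exists None, (c 2 isT), (c 3 isT).
- by exists (c 0 isT), (c 1 isT), (c 3 isT).
- by exists (c 0 isT), (c 1 isT), (c 2 isT).
Qed.

Section SubdividedK4.
Variables (T : finType) (e : rel T) (P : {set T}) (s : seq (T * T)).
Hypotheses (e_sym : symmetric e) (vs : valid_forces e P s) (Ds : derived P s = [set: T]).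
Variable G : option 'I_4 -> T.
Hypotheses (G_inj : injective G) (G_adj : forall o o', e (G o) (G o') = sk4_adj o o').
Hypothesis G_closed : forall x v, e (G (Some x)) v -> v \in codom G.

Let Q := [set o | G o \in P].

Lemma sk4_twin_in_P (x y : 'I_4) : x != y -> (val x)./2 = (val y)./2 ->
  (Some x \in Q) || (Some y \in Q).
Proof.
move=> xy x_y; rewrite !inE; apply: twins_meet_zero_forcing vs Ds _ _.
  by rewrite (inj_eq G_inj) (inj_eq (@Some_inj _)).
move=> v vx vy; have [/codomP[o def_v]|vG] := boolP (v \in codom G).
  by subst v; rewrite !G_adj (sk4_twins (y := y)) // -(inj_eq G_inj).
have notG z : e v (G (Some z)) = false.
  by apply: contraNF vG; rewrite e_sym; apply: G_closed.
by rewrite !notG.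
Qed.

Lemma sk4_two_in_P : exists x y : 'I_4, [/\ Some x \in Q, Some y \in Q & x != y].
Proof.
pose c i (lt_i4 : i < 4) : 'I_4 := Ordinal lt_i4.
have [x [x2 xQ]] : exists x : 'I_4, val x < 2 /\ Some x \in Q.
  have /orP[] := sk4_twin_in_P (x := c 0 isT) (y := c 1 isT) isT erefl.
  - by exists (c 0 isT).
  - by exists (c 1 isT).
have [y [y2 yQ]] : exists y : 'I_4, 2 <= val y /\ Some y \in Q.
  have /orP[] := sk4_twin_in_P (x := c 2 isT) (y := c 3 isT) isT erefl.
  - by exists (c 2 isT).
  - by exists (c 3 isT).
by exists x, y; split=> //; apply: contraTneq x2 => ->; rewrite -leqNgt.
Qed.

Lemma sk4_exactly_two_in_P : #|Q| = 2 -> exists x y : 'I_4, Q = [set Some x; Some y].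
Proof.
move=> Q2; have [x [y [xQ yQ xy]]] := sk4_two_in_P; exists x, y; apply/esym/eqP.
rewrite eqEcard cards2 (inj_eq (@Some_inj _)) xy Q2 andbT.
by apply/subsetP => o; rewrite in_set2 => /orP[]/eqP->.
Qed.

(* [W] is the white part of the gadget. Each black gadget vertex has three neighbours in
   the gadget and at most one of them black, so the first force into [W] comes from
   outside the gadget, and then it can only hit the subdivision vertex. *)
Lemma sk4_forced_from_outside : #|Q| = 2 -> G None \notin P /\
  forall v, (v, G None) \in s -> v \notin codom G.
Proof.
move=> /sk4_exactly_two_in_P[x [y EQ]].
have NoneP : G None \notin P by apply/negbT; move/setP/(_ None): EQ; rewrite !inE.
split=> // v0 v0_s.
pose W := [set w in codom G | w \notin P].
have WP : [disjoint W & P] by rewrite disjoints_subset; apply/subsetP => w; rewrite !inE => /andP[].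
have NoneW : G None \in W by rewrite inE codom_f.
have [v [u [vu_s uW vW u_only]]] := first_force_into vs WP (ex_intro2 _ _ (v0, G None) v0_s NoneW).
have [/codomP[u' def_u] uP] : u \in codom G /\ u \notin P by move: uW; rewrite inE => /andP.
have vG : v \notin codom G.
  apply/negP => /codomP[o def_v]; subst v u.
  have [z [q [def_o Q_zq]]] : exists z q, o = Some z /\ Q = [set Some z; q].
    have : o \in Q by move: vW; rewrite !inE codom_f negbK.
    rewrite EQ !inE => /orP[]/eqP->; first by exists x, (Some y).
    by exists y, (Some x); rewrite setUC.
  subst o; have [j zj /andP[jq ju']] := sk4_avoid2 z q u'.
  have jQ : j \notin Q.
    by rewrite Q_zq !inE negb_or jq andbT; apply: contraTneq zj => ->; rewrite sk4_adj_irr.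
  have GjW : G j \in W by rewrite inE codom_f; move: jQ; rewrite inE.
  by move: ju'; rewrite -(inj_eq G_inj) -[G u'](u_only _ GjW) ?eqxx // G_adj.
have u'_None : u' = None.
  case: u' def_u => // z def_u; subst u; move: vG.
  by rewrite (G_closed (x := z) (v := v)) // e_sym (forced_edge vs vu_s).
by subst u u'; rewrite (forced_once vs v0_s vu_s).
Qed.

Lemma sk4_zf_bound : zf_bound P s (G @: setT) (G None) 2.
Proof.
have AP : G @: setT :&: P = G @: Q.
  apply/setP => w; apply/setIP/imsetP => [[/imsetP[o _ ->] oP]|[o oQ ->]].
    by exists o; rewrite ?inE.
  by split; [apply: imset_f | rewrite inE in oQ].
rewrite /zf_bound AP card_imset //; split.
  have [x [y [xQ yQ xy]]] := sk4_two_in_P; apply/card_gt1P.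
  by exists (Some x), (Some y); rewrite (inj_eq (@Some_inj _)).
move=> /sk4_forced_from_outside[NoneP outside]; split=> // v /outside.
by apply: contra => /imsetP[o _ ->]; apply: codom_f.
Qed.

End SubdividedK4.

(** * Heap-indexed binary trees *)

Definition heap_parent (j : nat) : nat := j.-1./2.

Definition heap_ancestor (i j : nat) : bool :=
  has (fun m => iter m heap_parent j == i) (iota 0 j.+1).

Lemma iter_heap_parent_le m j : iter m heap_parent j <= j - m.
Proof.
elim: m => [|m IH] /=; first by rewrite subn0.
by move: IH; set p := iter m _ j; rewrite /heap_parent; lia.
Qed.

Lemma heap_ancestorP i j :
  reflect (exists m, iter m heap_parent j = i) (heap_ancestor i j).
Proof.
apply: (iffP hasP) => [[m _ /eqP <-]|[m <-]]; first by exists m.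
have [mj|jm] := leqP m j; first by exists m; rewrite ?mem_iota; lia.
exists j; first by rewrite mem_iota; lia.
by have := iter_heap_parent_le m j; have := iter_heap_parent_le j j; lia.
Qed.

Lemma heap_ancestor_le i j : heap_ancestor i j -> i <= j.
Proof. by case/heap_ancestorP=> m <-; have := iter_heap_parent_le m j; lia. Qed.

Lemma heap_ancestor_refl i : heap_ancestor i i.
Proof. by apply/heap_ancestorP; exists 0. Qed.

Lemma heap_ancestor_trans j i k :
  heap_ancestor i j -> heap_ancestor j k -> heap_ancestor i k.
Proof.
move=> /heap_ancestorP[m1 <-] /heap_ancestorP[m2 <-].
by apply/heap_ancestorP; exists (m1 + m2); rewrite iterD.
Qed.

Lemma heap_ancestor0 j : heap_ancestor 0 j.
Proof. by apply/heap_ancestorP; exists j; have := iter_heap_parent_le j j; lia. Qed.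

Lemma heap_ancestor_parent j : heap_ancestor (heap_parent j) j.
Proof. by apply/heap_ancestorP; exists 1. Qed.

Lemma heap_ancestorS i j : heap_ancestor i j =
  [|| j == i, heap_ancestor i.*2.+1 j | heap_ancestor i.*2.+2 j].
Proof.
have anc_child c : heap_parent c = i -> heap_ancestor c j -> heap_ancestor i j.
  by move=> <-; apply: heap_ancestor_trans (heap_ancestor_parent c).
apply/idP/idP; last first.
  case/or3P=> [/eqP->|anc|anc]; first exact: heap_ancestor_refl.
  - by apply: anc_child anc; rewrite /heap_parent; lia.
  - by apply: anc_child anc; rewrite /heap_parent; lia.
clear anc_child; elim: j {-2}j (leqnn j) => [|N IH] j jN anc_ij;
  have [->|ij] := eqVneq j i; rewrite ?eqxx //.
  by move: (heap_ancestor_le anc_ij) ij; lia.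
move/heap_ancestorP: anc_ij => -[[|m] def_i]; first by rewrite -def_i eqxx in ij.
rewrite iterSr in def_i; have [pj_i|] := eqVneq (heap_parent j) i.
  have: j = i.*2.+1 \/ j = i.*2.+2 by move: ij pj_i; rewrite /heap_parent; lia.
  by case=> ->; rewrite heap_ancestor_refl ?orbT.
move=> /negPf pj_i; have /IH : heap_parent j <= N by rewrite /heap_parent; lia.
move=> /(_ (introT (heap_ancestorP _ _) (ex_intro _ m def_i))); rewrite pj_i /=.
by case/orP=> anc; apply/orP; [left|right]; apply: heap_ancestor_trans anc (heap_ancestor_parent j).
Qed.

Lemma heap_ancestor_proper i j : heap_ancestor i j -> j != i -> i.*2.+1 <= j.
Proof.
rewrite heap_ancestorS => /or3P[/eqP->|/heap_ancestor_le le _|/heap_ancestor_le/ltnW le _].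
- by rewrite eqxx.
- exact: le.
- exact: le.
Qed.

Lemma heap_ancestor_total a b j :
  heap_ancestor a j -> heap_ancestor b j -> heap_ancestor a b || heap_ancestor b a.
Proof.
move=> /heap_ancestorP[m1 <-] /heap_ancestorP[m2 <-].
have [m12|m21] := leqP m1 m2.
  by apply/orP; right; apply/heap_ancestorP; exists (m2 - m1); rewrite -iterD subnK.
by apply/orP; left; apply/heap_ancestorP; exists (m1 - m2); rewrite -iterD subnK // ltnW.
Qed.

Lemma heap_ancestor_disjoint a b j : a != b -> b < a.*2.+1 -> a < b.*2.+1 ->
  heap_ancestor a j -> heap_ancestor b j -> False.
Proof.
move=> ab ba ab2 aj bj; case/orP: (heap_ancestor_total aj bj) => /heap_ancestor_proper.
- by rewrite eq_sym => /(_ ab); lia.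
- by move/(_ ab); lia.
Qed.

(** * The graph G_n *)

Lemma nleaves_eq n : 0 < n -> nleaves n = 4 ^ n.-1.
Proof. by move=> n_gt0; rewrite /nleaves /tdepth (_ : 2 * n - 1 - 1 = 2 * n.-1) ?expnM //; lia. Qed.

Lemma tsize_eq n : 0 < n -> Defs.tsize n = 2 * nleaves n - 1.
Proof.
by move=> n_gt0; rewrite /Defs.tsize /nleaves /tdepth -expnS; congr (2 ^ _ - 1); lia.
Qed.

Definition heap_index n (w : Gvert n) : nat :=
  match w with inl j => j | inr (k, _) => nleaves n - 1 + k end.

Definition subtree n (i : nat) : {set Gvert n} := [set w | heap_ancestor i (heap_index w)].

Definition is_root n (w : Gvert n) : bool := if w is inl z then val z == 0 else false.

Lemma rootvE n (z : 'I_(Defs.tsize n)) : val z = 0 -> rootv n = Some (inl z).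
Proof.
move=> z0; rewrite /rootv insubT /= => [|lt0]; first by rewrite -z0 ltn_ord.
by congr (Some (inl _)); apply: val_inj.
Qed.

Lemma Gadj_inl n (w : Gvert n) (i : 'I_(Defs.tsize n)) : Gadj w (inl i) ->
  (exists2 j : 'I_(Defs.tsize n), w = inl j & nat_of_ord j = heap_parent i) \/
  heap_index w \in [:: nat_of_ord i; i.*2.+1; i.*2.+2].
Proof.
case: w => [j|[k x]] /=.
  2: by rewrite /leaf_gadget_adj => /andP[/eqP-> _]; right; rewrite mem_head.
rewrite /tree_adj => /or4P[] /eqP ji.
- by left; exists j; rewrite // /heap_parent ji; lia.
- by left; exists j; rewrite // /heap_parent ji; lia.
- by right; rewrite ji !inE eqxx orbT.
- by right; rewrite ji !inE eqxx !orbT.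
Qed.

Section HatG.
Variables (n : nat) (T : finType) (e : rel T) (f : Hvert n -> T).
Hypotheses (n_gt0 : 0 < n) (e_sym : symmetric e) (f_inj : injective f).
Hypothesis f_ind : forall u v : Hvert n, e (f u) (f v) = Hadj u v.
Hypothesis f_cut : forall (u : Gvert n) (x : T),
  (forall w : Gvert n, x != f (Some w)) -> e (f (Some u)) x -> Some u = rootv n /\ x = f None.

Definition fG (w : Gvert n) : T := f (Some w).

Lemma fG_inj : injective fG.
Proof. by move=> w w' /f_inj[]. Qed.

Lemma fG_adj w w' : e (fG w) (fG w') = Gadj w w'.
Proof. exact: f_ind. Qed.

Lemma fG_closed w v : ~~ is_root w -> e (fG w) v -> v \in codom fG.
Proof.
move=> w_root wv; apply: contraR w_root => v_out.
have [] := f_cut (x := v) _ wv; first by move=> w'; apply: contraNneq v_out => ->; apply: codom_f.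
rewrite /rootv; case: insubP => // z _ z0 [->] _ /=; exact/eqP.
Qed.

Lemma inl_heap_indexE (w : Gvert n) (i : 'I_(Defs.tsize n)) : i < nleaves n - 1 ->
  (heap_index w == i) = (w == inl i).
Proof.
move=> i_int; apply/eqP/eqP => [|-> //].
by case: w => [j|[k x]] /= def_i; [congr inl; apply: val_inj | lia].
Qed.

Lemma subtree_split (i c1 c2 : 'I_(Defs.tsize n)) :
  nat_of_ord c1 = i.*2.+1 -> nat_of_ord c2 = i.*2.+2 -> c2 < nleaves n - 1 ->
  subtree n i = [set inl i; inl c1; inl c2] :|:
    ((subtree n c1.*2.+1 :|: subtree n c1.*2.+2) :|: (subtree n c2.*2.+1 :|: subtree n c2.*2.+2)).
Proof.
move=> c1E c2E c2_int; apply/setP => w; rewrite !inE heap_ancestorS -c2E -c1E.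
rewrite (heap_ancestorS c1) (heap_ancestorS c2).
rewrite !inl_heap_indexE; try lia.
by case: (w == inl i); case: (w == inl c1); case: (w == inl c2); rewrite /= ?orbT // -!orbA.
Qed.

Lemma mem_subtree_root (g : 'I_(Defs.tsize n)) : fG (inl g) \in fG @: subtree n g.
Proof. by rewrite mem_imset ?inE ?heap_ancestor_refl //; apply: fG_inj. Qed.

Lemma mem_subtree_ltF (x : 'I_(Defs.tsize n)) g : x < g ->
  (fG (inl x) \in fG @: subtree n g) = false.
Proof.
by rewrite (mem_imset _ _ fG_inj) inE => xg; apply: contraTF xg => /heap_ancestor_le /=; lia.
Qed.

Lemma subtree_disjoint a b : a != b -> b < a.*2.+1 -> a < b.*2.+1 ->
  [disjoint fG @: subtree n a & fG @: subtree n b].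
Proof.
move=> ab ba ab2; rewrite imset_disjoint; last exact: fG_inj.
rewrite disjoints_subset; apply/subsetP => w; rewrite !inE => wa; apply/negP => wb.
exact: heap_ancestor_disjoint ab ba ab2 wa wb.
Qed.

Lemma subtree_attached (g c : 'I_(Defs.tsize n)) : g != 0 :> nat -> nat_of_ord c = heap_parent g ->
  attached e (fG @: subtree n g) (fG (inl g)) (fG (inl c)).
Proof.
move=> g0 cE v vg v_out.
have /codomP[w def_v] := fG_closed (w := inl g) g0 (etrans (e_sym _ _) vg); subst v.
move: vg; rewrite fG_adj => /Gadj_inl[[j -> jE]|w_child].
  by congr (fG (inl _)); apply: val_inj; rewrite /= jE cE.
move: v_out; rewrite (mem_imset _ _ fG_inj) inE heap_ancestorS.
by move: w_child; rewrite !inE => /or3P[]/eqP->; rewrite ?eqxx ?heap_ancestor_refl ?orbT.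
Qed.

Lemma subtree_no_edge (i : 'I_(Defs.tsize n)) g v : (i.*2.+1).*2.+1 <= g ->
  v \in fG @: subtree n g -> ~~ e v (fG (inl i)).
Proof.
move=> ig /imsetP[w]; rewrite inE => /heap_ancestor_le wg ->; rewrite fG_adj.
apply/negP => /Gadj_inl[[j def_w jE]|]; first by move: wg; rewrite def_w /= jE /heap_parent; lia.
by rewrite !inE => /or3P[]/eqP; lia.
Qed.

Section Forcing.
Variables (P : {set T}) (s : seq (T * T)).
Hypotheses (vs : valid_forces e P s) (Ds : derived P s = [set: T]).

Lemma leaf_zf_bound (i : 'I_(Defs.tsize n)) : nleaves n - 1 <= i ->
  zf_bound P s (fG @: subtree n i) (fG (inl i)) 2.
Proof.
have ltL (j : 'I_(Defs.tsize n)) : j < 2 * nleaves n - 1 by rewrite -tsize_eq.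
move=> i_leaf; have i_lt := ltL i.
have k_lt : i - (nleaves n - 1) < nleaves n by lia.
pose k := Ordinal k_lt.
pose g (o : option 'I_4) : Gvert n := if o is Some x then inr (k, x) else inl i.
have sub_i : subtree n i = g @: setT.
  apply/setP => w; rewrite inE; apply/idP/imsetP => [anc|[o _ ->]]; last first.
    by case: o => [x|] /=; rewrite ?subnKC // heap_ancestor_refl.
  have below_i j : j < 2 * nleaves n - 1 -> heap_ancestor i j -> j = i.
    by move=> j_lt ij; apply/eqP; apply: contraTT j_lt => /(heap_ancestor_proper ij); lia.
  case: w anc => [j|[k' x]] /= anc.
  - by exists None => //; congr inl; apply: val_inj; apply: below_i (ltL j) anc.
  - exists (Some x) => //; congr (inr (_, x)); apply: val_inj => /=.
    have /below_i/(_ anc) : nleaves n - 1 + k' < 2 * nleaves n - 1 by have := ltn_ord k'; lia.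
    lia.
rewrite sub_i -imset_comp; apply: (sk4_zf_bound e_sym vs Ds (G := fG \o g)).
- by move=> [x|] [x'|] /fG_inj //= [->].
- move=> [x|] [x'|]; rewrite /= fG_adj /= ?eqxx //.
  + by rewrite /leaf_gadget_adj /= subnKC // eqxx.
  + by rewrite /leaf_gadget_adj /= subnKC // eqxx.
  + by rewrite /tree_adj; apply/negP => /or4P[]/eqP; lia.
- move=> x v xv; have /codomP[w def_v] := fG_closed (w := inr (k, x)) isT xv; subst v.
  move: xv; rewrite fG_adj; case: w => [j|[k' x']] /=.
    rewrite /leaf_gadget_adj => /andP[/eqP jE _].
    by apply/codomP; exists None; congr (fG (inl _)); apply: val_inj; rewrite jE /= subnKC.
  by move=> /andP[/eqP <- _]; apply: (codom_f (fG \o g) (Some x')).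
Qed.

Lemma subtree_zf_bound_step (i : 'I_(Defs.tsize n)) k : i.*2.+2 < nleaves n - 1 ->
  (forall g : 'I_(Defs.tsize n), (i.*2.+1).*2.+1 <= g <= (i.*2.+2).*2.+2 ->
     zf_bound P s (fG @: subtree n g) (fG (inl g)) k) ->
  zf_bound P s (fG @: subtree n i) (fG (inl i)) (2 * (2 * k + 1)).
Proof.
move=> i_int bound_g.
have vtx d : d <= (i.*2.+2).*2.+2 -> {v : 'I_(Defs.tsize n) | nat_of_ord v = d}.
  move=> d_le; have d_lt : d < Defs.tsize n by rewrite tsize_eq //; lia.
  by exists (Ordinal d_lt).
have [c1 c1E] := vtx i.*2.+1 ltac:(lia); have [c2 c2E] := vtx i.*2.+2 ltac:(lia).
have [g1 g1E] := vtx c1.*2.+1 ltac:(lia); have [g2 g2E] := vtx c1.*2.+2 ltac:(lia).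
have [g3 g3E] := vtx c2.*2.+1 ltac:(lia); have [g4 g4E] := vtx c2.*2.+2 ltac:(lia).
have [bound12 forced12] := siblings_bound vs Ds (bound_g g1 ltac:(lia)) (bound_g g2 ltac:(lia))
  (mem_subtree_root g1) (mem_subtree_root g2)
  (@subtree_disjoint g1 g2 ltac:(lia) ltac:(lia) ltac:(lia))
  (@subtree_attached g1 c1 ltac:(lia) ltac:(rewrite /heap_parent; lia))
  (@subtree_attached g2 c1 ltac:(lia) ltac:(rewrite /heap_parent; lia)).
have [bound34 forced34] := siblings_bound vs Ds (bound_g g3 ltac:(lia)) (bound_g g4 ltac:(lia))
  (mem_subtree_root g3) (mem_subtree_root g4)
  (@subtree_disjoint g3 g4 ltac:(lia) ltac:(lia) ltac:(lia))
  (@subtree_attached g3 c2 ltac:(lia) ltac:(rewrite /heap_parent; lia))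
  (@subtree_attached g4 c2 ltac:(lia) ltac:(rewrite /heap_parent; lia)).
rewrite (subtree_split c1E c2E) -?g2E -?g1E -?g4E -?g3E; last lia.
rewrite !imsetU !imset_set1.
apply: (grandparent_bound vs bound12 forced12 bound34 forced34).
- rewrite !disjointsU !disjointsUr -!andbA.
  by apply/and4P; split; apply: subtree_disjoint; lia.
- by rewrite !disjointsU !disjoints1 !in_setU !mem_subtree_ltF //; lia.
- by move=> w; rewrite !in_setU => /orP[/orP[]|/orP[]] w_in; apply: subtree_no_edge w_in; lia.
Qed.

(* The nodes in this range are at depth [2 (n - 1 - h)], so their subtrees have height [2 h]. *)
Lemma subtree_zf_bound h (i : 'I_(Defs.tsize n)) : h <= n.-1 ->
  4 ^ (n.-1 - h) - 1 <= i < 2 * 4 ^ (n.-1 - h) - 1 ->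
  zf_bound P s (fG @: subtree n i) (fG (inl i)) (tseq h).
Proof.
elim: h i => [|h IH] i h_le /andP[lo hi].
  by apply: leaf_zf_bound; rewrite nleaves_eq // -(subn0 n.-1).
have q4 : 4 ^ (n.-1 - h) = 4 * 4 ^ (n.-1 - h.+1) by rewrite -expnS; congr expn; lia.
have qL : 4 ^ (n.-1 - h) <= nleaves n by rewrite nleaves_eq // leq_pexp2l //; lia.
rewrite /= (_ : 4 * tseq h + 2 = 2 * (2 * tseq h + 1)); last lia.
apply: subtree_zf_bound_step => [|g g_range]; first lia.
by apply: IH; lia.
Qed.

End Forcing.
End HatG.

Theorem lemma1 (n : nat) (hn : (1 <= n)%N)
  (T : finType) (e : rel T) (e_sym : symmetric e) (e_irr : irreflexive e)
  (f : Hvert n -> T) (f_inj : injective f)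
  (f_ind : forall u v : Hvert n, e (f u) (f v) = Hadj u v)
  (f_cut : forall (u : Gvert n) (x : T),
      (forall w : Gvert n, x != f (Some w)) -> e (f (Some u)) x ->
      Some u = rootv n /\ x = f None)
  (P : {set T}) (hP : zero_forcing_set e P) :
  (t n <= #|P :&: [set f (Some w) | w : Gvert n]|)%N /\
  (#|P :&: [set f (Some w) | w : Gvert n]| = t n ->
     f (rootv n) \notin P /\
     forall s : seq (T * T), valid_forces e P s -> derived P s = [set: T] ->
       forall v : T, (v, f (rootv n)) \in s -> forall w : Gvert n, v != f (Some w)).
Proof.
have root_lt : 0 < Defs.tsize n.
  have : 0 < 4 ^ n.-1 by rewrite expn_gt0.
  by rewrite tsize_eq // nleaves_eq //; lia.
pose r := Ordinal root_lt.
have bound s : valid_forces e P s -> derived P s = [set: T] ->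
    zf_bound P s (fG f @: subtree n r) (fG f (inl r)) (tseq n.-1).
  move=> vs Ds; refine (subtree_zf_bound hn e_sym f_inj f_ind f_cut vs Ds (leqnn _) _).
  by rewrite subnn.
have [s0 [vs0 Ds0]] := hP.
rewrite /t (rootvE (z := r) erefl); set G := [set f (Some w) | w : Gvert n].
have -> : G = fG f @: subtree n r.
  by apply/setP => x; apply/imsetP/imsetP => -[w _ ->]; exists w; rewrite ?inE ?heap_ancestor0.
rewrite setIC.
have [lower tight] := bound s0 vs0 Ds0; split=> // Pt.
split=> [|s vs Ds v vr w]; first by have [] := tight Pt.
have [_ /(_ Pt) [_ /(_ v vr) v_out]] := bound s vs Ds.
by apply: contraNneq v_out => ->; apply: imset_f; rewrite inE heap_ancestor0.
Qed.
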